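(* The class of all irreflexive symmetric frames with at least $2$ elements is relatively elementary definable in $\mathcal{L}_2$.
   Context: A frame is a pair $(W,R)$ with $W$ non-empty and $R\subseteq W\times W$. For sets $A,B$ with $A\cap B=\emptyset$, $A\cup B\neq\emptyset$, and a function $\rho:A\to\wp(B)$, the galaxy $\mathcal{F}^{\rho}_{A,B}$ is the frame with universe $A\cup B$ and relation $\bigcup_{s\in A}(\{s\}\times\rho(s))\cup(B\times B)$. $\mathcal{L}_2$ is the class of all galaxies $\mathcal{F}^{\rho}_{A,B}$ with $|A|\ge4$, $|B|\ge4$ and $|B\setminus\rho(s)|=2$ for all $s\in A$. First-order formulas use one binary relation symbol $\mathbf{R}$ and equality. A class $\mathcal{C}$ of frames is relatively elementary definable in a class $\mathcal{C}'$ if there are first-order formulas $\mathbf{U}(\mathbf{x}_1,\mathbf{x}_2)$, $\mathbf{E}(\mathbf{x}_1,\mathbf{x}_2,\mathbf{y}_1,\mathbf{y}_2)$, $\mathbf{A}(\mathbf{x}_1,\mathbf{x}_2,\mathbf{y}_1,\mathbf{y}_2)$ such that for every frame $(W,R)\in\mathcal{C}$ there is a frame $(W',R')\in\mathcal{C}'$ such that, letting $X$ be the set of pairs $(s_1,s_2)\in W'^2$ satisfying $\mathbf{U}$ in $(W',R')$, $\eta$ the binary relation on $X$ defined by $\mathbf{E}$ and $S$ the binary relation on $X$ defined by $\mathbf{A}$: $X$ is non-empty, $\eta$ is a congruence on $(X,S)$ (an equivalence relation on $X$ such that $a\,\eta\,c$ and $b\,\eta\,d$ imply ($aSb$ iff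 $cSd$)), and the quotient $(X,S)/\eta$ is isomorphic to $(W,R)$. *)

From Stdlib Require Import Arith.

(** Frames: a carrier and a binary relation.  Non-emptiness is imposed
    by the classes considered below. *)
Record frame := Frame { W : Type; Rel : W -> W -> Prop }.

(** First-order formulas with one binary relation symbol and equality;
    variables are natural numbers (x1,x2,y1,y2 are 0,1,2,3). *)
Inductive form :=
| FBot : form
| FR : nat -> nat -> form
| FEq : nat -> nat -> form
| FNot : form -> form
| FAnd : form -> form -> form
| FOr : form -> form -> form
| FImp : form -> form -> form
| FAll : nat -> form -> form
| FEx : nat -> form -> form.

Fixpoint free_in (v : nat) (f : form) : bool :=
  match f with
  | FBot => false
  | FR i j | FEq i j => Nat.eqb v i || Nat.eqb v j
  | FNot g => free_in v g
  | FAnd g h | FOr g h | FImp g h => free_in v g || free_in v h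
  | FAll x g | FEx x g => negb (Nat.eqb v x) && free_in v g
  end.

Definition free_below (n : nat) (f : form) : Prop :=
  forall v, free_in v f = true -> v < n.

Definition upd {T : Type} (e : nat -> T) (x : nat) (d : T) : nat -> T :=
  fun v => if Nat.eqb v x then d else e v.

Fixpoint sat (F : frame) (e : nat -> W F) (f : form) : Prop :=
  match f with
  | FBot => False
  | FR i j => Rel F (e i) (e j)
  | FEq i j => e i = e j
  | FNot g => ~ sat F e g
  | FAnd g h => sat F e g /\ sat F e h
  | FOr g h => sat F e g \/ sat F e h
  | FImp g h => sat F e g -> sat F e h
  | FAll x g => forall d : W F, sat F (upd e x d) g
  | FEx x g => exists d : W F, sat F (upd e x d) g
  end.

(** assignments x1:=a1, x2:=a2 (resp. x1,x2,y1,y2 := a1,a2,b1,b2);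
    other variables are irrelevant since formulas are restricted by
    [free_below]. *)
Definition env2 {T : Type} (a1 a2 : T) : nat -> T :=
  fun v => match v with 0 => a1 | _ => a2 end.
Definition env4 {T : Type} (a1 a2 b1 b2 : T) : nat -> T :=
  fun v => match v with 0 => a1 | 1 => a2 | 2 => b1 | _ => b2 end.

Definition galaxy (T : Type) (A B : T -> Prop) (rho : T -> T -> Prop) : frame :=
  @Frame {x : T | A x \/ B x}
    (fun x y => (A (proj1_sig x) /\ rho (proj1_sig x) (proj1_sig y))
                \/ (B (proj1_sig x) /\ B (proj1_sig y))).

Definition at_least_4 {T : Type} (P : T -> Prop) : Prop :=
  exists a b c d, P a /\ P b /\ P c /\ P d /\
    a <> b /\ a <> c /\ a <> d /\ b <> c /\ b <> d /\ c <> d.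

Definition exactly_2 {T : Type} (P : T -> Prop) : Prop :=
  exists a b, a <> b /\ P a /\ P b /\ forall c, P c -> c = a \/ c = b.

Definition in_L2 (F : frame) : Prop :=
  exists (T : Type) (A B : T -> Prop) (rho : T -> T -> Prop),
    (forall x, A x -> B x -> False) /\
    (exists x, A x \/ B x) /\
    (forall s t, A s -> rho s t -> B t) /\          (* rho : A -> P(B) *)
    at_least_4 A /\ at_least_4 B /\
    (forall s, A s -> exactly_2 (fun t => B t /\ ~ rho s t)) /\
    F = galaxy T A B rho.

Definition quot_carrier {X : Type} (eta : X -> X -> Prop) : Type :=
  {P : X -> Prop | exists a, P = eta a}.
Definition quot_rel {X : Type} (eta S : X -> X -> Prop)
  (P Q : quot_carrier eta) : Prop :=
  exists a b, proj1_sig P = eta a /\ proj1_sig Q = eta b /\ S a b.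

Definition congruence {X : Type} (eta S : X -> X -> Prop) : Prop :=
  (forall a, eta a a) /\ (forall a b, eta a b -> eta b a) /\
  (forall a b c, eta a b -> eta b c -> eta a c) /\
  (forall a b c d, eta a c -> eta b d -> (S a b <-> S c d)).

Definition isomorphic {X Y : Type} (S : X -> X -> Prop) (R : Y -> Y -> Prop) : Prop :=
  exists f : X -> Y,
    (forall x y, f x = f y -> x = y) /\ (forall y, exists x, f x = y) /\
    (forall x y, S x y <-> R (f x) (f y)).

Definition rel_elem_definable (C C' : frame -> Prop) : Prop :=
  exists U E Af : form,
    free_below 2 U /\ free_below 4 E /\ free_below 4 Af /\
    forall F, C F -> exists F', C' F' /\
      let X := {p : W F' * W F' | sat F' (env2 (fst p) (snd p)) U} in
      let eta := fun a b : X => sat F'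
         (env4 (fst (proj1_sig a)) (snd (proj1_sig a))
               (fst (proj1_sig b)) (snd (proj1_sig b))) E in
      let S := fun a b : X => sat F'
         (env4 (fst (proj1_sig a)) (snd (proj1_sig a))
               (fst (proj1_sig b)) (snd (proj1_sig b))) Af in
      inhabited X /\ congruence eta S /\
      isomorphic (quot_rel eta S) (Rel F).

Definition irr_sym_2 (F : frame) : Prop :=
  (exists x y : W F, x <> y) /\
  (forall x, ~ Rel F x x) /\
  (forall x y, Rel F x y -> Rel F y x).

From Stdlib Require Import Bool PeanoNat Classical ProofIrrelevance
  FunctionalExtensionality PropExtensionality ClassicalEpsilon.

(* Encode an irreflexive symmetric frame (V, R) as a galaxy.  Its clique part B
   has a point for each vertex and two markers; its part A has, for each pair
   with u R v, a point seeing all of B except the vertices u and v, and four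
   padding points seeing all of B except the two markers.  Loops single out B.
   A loop point x is a marker iff for some loop point d <> x three distinct
   points of A see neither x nor d: for a vertex x only the two points of the
   pair {x, d} qualify.  Two distinct vertices are R-related iff some
   point of A sees neither of them.  Hence the pairs (vertex, anything), taken
   modulo their first component, with this relation give back (V, R). *)

Fixpoint free_vars_within (ok : nat -> bool) (f : form) : bool :=
  match f with
  | FBot => true
  | FR i j | FEq i j => ok i && ok j
  | FNot g => free_vars_within ok g
  | FAnd g h | FOr g h | FImp g h =>
      free_vars_within ok g && free_vars_within ok h
  | FAll x g | FEx x g => free_vars_within (fun v => Nat.eqb v x || ok v) g
  end.

Lemma free_vars_within_sound ok f v :
  free_vars_within ok f = true -> free_in v f = true -> ok v = true.
Proof.
  revert ok; induction f as [| i j | i j | g IH | g IHg h IHh | g IHg h IHh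
    | g IHg h IHh | x g IH | x g IH]; intros ok Hf Hv; simpl in *;
    rewrite ?andb_true_iff, ?orb_true_iff in *; try discriminate.
  1,2: destruct Hf; destruct Hv as [E | E]; apply Nat.eqb_eq in E; subst; assumption.
  1: auto.
  1-3: destruct Hf, Hv; auto.
  1-2: destruct Hv as [Hx Hv]; apply negb_true_iff, Nat.eqb_neq in Hx;
       apply (IH _ Hf), orb_true_iff in Hv as [E | E]; auto;
       apply Nat.eqb_eq in E; contradiction.
Qed.

Lemma free_below_of_within n f :
  free_vars_within (fun v => Nat.ltb v n) f = true -> free_below n f.
Proof.
  intros Hf v Hv. apply Nat.ltb_lt, (free_vars_within_sound _ _ _ Hf Hv).
Qed.

Lemma proj1_sig_inj {T : Type} {P : T -> Prop} (x y : {t | P t}) :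
  proj1_sig x = proj1_sig y -> x = y.
Proof. destruct x, y; apply subset_eq_compat. Qed.

Section KernelQuotient.

Variables (X Y : Type) (g : X -> Y) (R : Y -> Y -> Prop).
Variables (eta S : X -> X -> Prop).
Hypothesis eta_kernel : forall a b, eta a b <-> g a = g b.
Hypothesis S_pullback : forall a b, S a b <-> R (g a) (g b).

Lemma kernel_congruence : congruence eta S.
Proof.
  split; [|split; [|split]]; intros *; rewrite ?eta_kernel; try congruence.
  intros E1 E2; rewrite !S_pullback, E1, E2; reflexivity.
Qed.

Hypothesis g_surj : forall y, exists a, g a = y.

Definition class_image (P : quot_carrier eta) : Y :=
  g (proj1_sig (constructive_indefinite_description _ (proj2_sig P))).

Lemma class_image_eq (P : quot_carrier eta) a :
  proj1_sig P = eta a -> class_image P = g a.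
Proof.
  unfold class_image; destruct constructive_indefinite_description as [b Hb].
  intros Ha; cbn.
  assert (Hab : eta a b) by (rewrite <- Ha, Hb; apply eta_kernel; reflexivity).
  symmetry; apply eta_kernel, Hab.
Qed.

Lemma kernel_quotient_iso : isomorphic (quot_rel eta S) R.
Proof.
  exists class_image; split; [|split].
  - intros P Q E; destruct (proj2_sig P) as [a Ha], (proj2_sig Q) as [b Hb].
    rewrite (class_image_eq P a Ha), (class_image_eq Q b Hb) in E.
    apply proj1_sig_inj.
    rewrite Ha, Hb. apply functional_extensionality; intro z.
    apply propositional_extensionality; rewrite !eta_kernel, E; reflexivity.
  - intros y; destruct (g_surj y) as [a <-].
    exists (exist _ (eta a) (ex_intro _ a eq_refl)); apply class_image_eq; reflexivity.
  - intros P Q; split.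
    + intros (a & b & Ha & Hb & Hab).
      rewrite (class_image_eq _ a Ha), (class_image_eq _ b Hb); apply S_pullback, Hab.
    + destruct (proj2_sig P) as [a Ha], (proj2_sig Q) as [b Hb]; intros HR.
      rewrite (class_image_eq P a Ha), (class_image_eq Q b Hb) in HR.
      exists a, b; split; [exact Ha|split; [exact Hb|apply S_pullback, HR]].
Qed.

End KernelQuotient.

Definition blind_to (F : frame) (s a b : W F) : Prop :=
  ~ Rel F s s /\ ~ Rel F s a /\ ~ Rel F s b.

Definition blind_form (i j k : nat) : form :=
  FAnd (FNot (FR i i)) (FAnd (FNot (FR i j)) (FNot (FR i k))).

Definition vertex_form : form :=
  FAnd (FR 0 0) (FNot (FEx 2 (FAnd (FR 2 2) (FAnd (FNot (FEq 0 2))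
    (FEx 3 (FEx 4 (FEx 5
      (FAnd (FAnd (FNot (FEq 3 4)) (FAnd (FNot (FEq 3 5)) (FNot (FEq 4 5))))
        (FAnd (blind_form 3 0 2) (FAnd (blind_form 4 0 2) (blind_form 5 0 2))))))))))).

Definition same_form : form := FEq 0 2.

Definition adj_form : form := FAnd (FNot (FEq 0 2)) (FEx 4 (blind_form 4 0 2)).

Lemma sat_vertex_form (F : frame) (a1 a2 : W F) :
  sat F (env2 a1 a2) vertex_form <->
  Rel F a1 a1 /\ ~ exists d, Rel F d d /\ a1 <> d /\
    exists s1 s2 s3, (s1 <> s2 /\ s1 <> s3 /\ s2 <> s3) /\
      blind_to F s1 a1 d /\ blind_to F s2 a1 d /\ blind_to F s3 a1 d.
Proof. reflexivity. Qed.

Lemma sat_adj_form (F : frame) (x1 x2 y1 y2 : W F) :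
  sat F (env4 x1 x2 y1 y2) adj_form <-> x1 <> y1 /\ exists z, blind_to F z x1 y1.
Proof. reflexivity. Qed.

Lemma free_below_forms :
  free_below 2 vertex_form /\ free_below 4 same_form /\ free_below 4 adj_form.
Proof. repeat split; apply free_below_of_within; reflexivity. Qed.

Inductive point (V : Type) : Type :=
| Vert (v : V) | Mark (b : bool) | Edge (u v : V) | Pad (b1 b2 : bool).
Arguments Vert {V}. Arguments Mark {V}. Arguments Edge {V}. Arguments Pad {V}.

Section Code.

Context {V : Type} (RR : V -> V -> Prop).

Definition in_A (s : point V) : Prop :=
  match s with Edge u v => RR u v | Pad _ _ => True | _ => False end.

Definition in_B (t : point V) : Prop :=
  match t with Vert _ | Mark _ => True | _ => False end.

Definition gap (s t : point V) : Prop :=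
  match s, t with
  | Edge p q, Vert u => u = p \/ u = q
  | Pad _ _, Mark _ => True
  | _, _ => False
  end.

Definition sees (s t : point V) : Prop := in_B t /\ ~ gap s t.

Definition code : frame := galaxy (point V) in_A in_B sees.

Lemma gap_two_vertices s w t :
  gap s (Vert w) -> gap s t -> t <> Vert w ->
  exists c, t = Vert c /\ (s = Edge w c \/ s = Edge c w).
Proof.
  destruct s as [| |p q|], t as [c| | |]; cbn; try tauto.
  intros [-> | ->] [-> | ->] Hne; eauto; contradiction.
Qed.

Lemma code_loop (x : W code) : Rel code x x <-> in_B (proj1_sig x).
Proof. destruct x as [[] ?]; cbn; unfold sees; cbn; tauto. Qed.

Lemma code_blind_to (z x y : W code) :
  in_B (proj1_sig x) -> in_B (proj1_sig y) ->
  blind_to code z x y <->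
  in_A (proj1_sig z) /\
  gap (proj1_sig z) (proj1_sig x) /\ gap (proj1_sig z) (proj1_sig y).
Proof.
  destruct z as [s Hs]; unfold blind_to; cbn; intros Hx Hy.
  assert (Hdisj : ~ (in_A s /\ in_B s)) by (destruct s; cbn; tauto).
  split.
  - intros (Hzz & Hzx & Hzy); destruct Hs as [Hs | Hs]; [|tauto].
    unfold sees in *; repeat split; trivial; apply NNPP; tauto.
  - unfold sees; tauto.
Qed.

Lemma code_vertex_form (a1 a2 : W code) :
  sat code (env2 a1 a2) vertex_form <-> exists w, proj1_sig a1 = Vert w.
Proof.
  rewrite sat_vertex_form, code_loop.
  destruct a1 as [t Ht]; cbn; split.
  - intros [Hloop Hno]; destruct t as [w|b| |]; cbn in Hloop; try contradiction; eauto.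
    exfalso; apply Hno.
    assert (Hne : forall p q : W code, proj1_sig p <> proj1_sig q -> p <> q)
      by (intros p q Hpq E; apply Hpq; rewrite E; reflexivity).
    exists (exist _ (Mark (negb b)) (or_intror I)).
    split; [apply code_loop; exact I|].
    split; [apply Hne; destruct b; discriminate|].
    exists (exist _ (Pad true true) (or_introl I)),
      (exist _ (Pad true false) (or_introl I)), (exist _ (Pad false true) (or_introl I)).
    split; [repeat split; apply Hne; discriminate|].
    split; [|split]; apply code_blind_to; cbn; tauto.
  - intros [w ->]; split; [exact I|].
    intros (d & Hd & Hne & s1 & s2 & s3 & (n12 & n13 & n23) & B1 & B2 & B3).
    apply code_loop in Hd.
    assert (Hdw : proj1_sig d <> Vert w)
      by (intro E; apply Hne, proj1_sig_inj; cbn; auto).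
    apply code_blind_to in B1 as (_ & G1 & H1), B2 as (_ & G2 & H2), B3 as (_ & G3 & H3);
      cbn; trivial.
    destruct (gap_two_vertices _ _ _ G1 H1 Hdw) as (c & Ec & E1),
      (gap_two_vertices _ _ _ G2 H2 Hdw) as (c2 & Ec2 & E2),
      (gap_two_vertices _ _ _ G3 H3 Hdw) as (c3 & Ec3 & E3).
    rewrite Ec in Ec2, Ec3; injection Ec2 as <-; injection Ec3 as <-.
    destruct E1, E2, E3; solve
      [ apply n12, proj1_sig_inj; congruence
      | apply n13, proj1_sig_inj; congruence
      | apply n23, proj1_sig_inj; congruence ].
Qed.

Hypothesis RR_irrefl : forall v, ~ RR v v.

Lemma code_adj_form (RR_sym : forall u v, RR u v -> RR v u)
  (x1 x2 y1 y2 : W code) (u v : V) :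
  proj1_sig x1 = Vert u -> proj1_sig y1 = Vert v ->
  sat code (env4 x1 x2 y1 y2) adj_form <-> RR u v.
Proof.
  intros Ex Ey; rewrite sat_adj_form; split.
  - intros [Hne [z Hz]].
    apply code_blind_to in Hz as (HA & Gu & Gv); rewrite ?Ex, ?Ey in *; cbn; trivial.
    assert (Hvu : Vert v <> Vert u) by (intro E; apply Hne, proj1_sig_inj; congruence).
    destruct (gap_two_vertices _ _ _ Gu Gv Hvu) as (c & Ec & [Ez | Ez]);
      injection Ec as <-; rewrite Ez in HA; auto.
  - intros Huv; split.
    + intros <-; rewrite Ex in Ey; injection Ey as <-; exact (RR_irrefl _ Huv).
    + exists (exist _ (Edge u v) (or_introl Huv)).
      apply code_blind_to; rewrite ?Ex, ?Ey; cbn; tauto.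
Qed.

Lemma code_in_L2 (x0 y0 : V) : x0 <> y0 -> in_L2 code.
Proof.
  intros Hxy; exists (point V), in_A, in_B, sees.
  split; [intros []; cbn; tauto|].
  split; [exists (Mark true); right; exact I|].
  split; [intros s t _ [Ht _]; exact Ht|].
  split.
  { exists (Pad true true), (Pad true false), (Pad false true), (Pad false false).
    repeat split; discriminate. }
  split.
  { exists (Vert x0), (Vert y0), (Mark true), (Mark false).
    repeat split; try discriminate; intros [= E]; contradiction. }
  split; [|reflexivity].
  assert (Hmissed : forall s t, in_B t /\ ~ sees s t <-> in_B t /\ gap s t)
    by (intros s t; unfold sees; split; [intros [Ht Hn]; split; [|apply NNPP]|]; tauto).
  intros [| |u v|] Hs; cbn in Hs; try contradiction.
  - exists (Vert u), (Vert v); rewrite !Hmissed; cbn.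
    split; [intros [= <-]; exact (RR_irrefl _ Hs)|].
    split; [tauto|]; split; [tauto|].
    intros [c| | |]; rewrite Hmissed; cbn; [intros [_ [-> | ->]]|..]; tauto.
  - exists (Mark true), (Mark false); rewrite !Hmissed; cbn.
    split; [discriminate|]; split; [tauto|]; split; [tauto|].
    intros [|[]| |]; rewrite Hmissed; cbn; tauto.
Qed.

End Code.

Definition vertex_label {V : Type} (default : V) (t : point V) : V :=
  match t with Vert w => w | _ => default end.

Theorem lemma48 : rel_elem_definable irr_sym_2 in_L2.
Proof.
  destruct free_below_forms as (fbU & fbE & fbA).
  exists vertex_form, same_form, adj_form.
  split; [exact fbU|split; [exact fbE|split; [exact fbA|]]].
  intros F [[x0 [y0 Hxy]] [Hirr Hsym]].
  exists (code (Rel F)); split; [exact (code_in_L2 _ Hirr _ _ Hxy)|]; cbv zeta.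
  set (X := {p : W (code (Rel F)) * W (code (Rel F)) |
              sat _ (env2 (fst p) (snd p)) vertex_form}).
  pose (g := fun p : X => vertex_label x0 (proj1_sig (fst (proj1_sig p)))).
  assert (Hg : forall p : X, proj1_sig (fst (proj1_sig p)) = Vert (g p)).
  { intros [[a1 a2] Ha]; destruct (proj1 (code_vertex_form _ a1 a2) Ha) as [w Hw].
    unfold g; cbn; rewrite Hw; reflexivity. }
  assert (g_surj : forall y, exists a : X, g a = y).
  { intros y; pose (v := exist _ (Vert y) (or_intror I) : W (code (Rel F))).
    exists (exist _ (v, v) (proj2 (code_vertex_form _ v v) (ex_intro _ y eq_refl))).
    reflexivity. }
  split; [destruct (g_surj x0) as [a _]; exact (inhabits a)|].
  assert (eta_kernel : forall a b : X,
            fst (proj1_sig a) = fst (proj1_sig b) <-> g a = g b).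
  { intros a b; split.
    - intros E; apply (f_equal (@proj1_sig _ _)) in E; rewrite !Hg in E; congruence.
    - intros E; apply proj1_sig_inj; rewrite !Hg, E; reflexivity. }
  split; [apply (kernel_congruence _ _ g (Rel F))|apply (kernel_quotient_iso _ _ g)].
  all: trivial; intros a b; apply code_adj_form; trivial.
Qed.
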